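(* Let $G$ be a graph on $n$ vertices with degrees $d_1,\ldots,d_n$ and signless Laplacian eigenvalues $q_1\ge\cdots\ge q_n$, and let $t\ge 1$ be an integer. Then the signless Laplacian eigenvalues of the blow-up $G^{(t)}$, listed with multiplicity (a total of $tn$ values), are $tq_1,\ldots,tq_n$ together with $td_1,\ldots,td_n$, where each $td_i$ ($i=1,\ldots,n$) is taken with multiplicity $t-1$.
   Context: All graphs are simple and undirected. For a graph $H$, $A(H)$ is its adjacency matrix, $D(H)$ the diagonal matrix of its vertex degrees, and $Q(H)=D(H)+A(H)$ its signless Laplacian matrix; signless Laplacian eigenvalues are the eigenvalues of $Q(H)$. For a graph $G$ and an integer $t\ge 1$, the blow-up $G^{(t)}$ is the graph obtained by replacing each vertex $u$ of $G$ by a set $V_u$ of $t$ pairwise nonadjacent vertices, and each edge $\{u,v\}$ of $G$ by a complete bipartite graph with parts $V_u$ and $V_v$ (so $A(G^{(t)})=A(G)\otimes J_t$, with $J_t$ the $t\times t$ all-ones matrix). *)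

From HB Require Import structures.
From mathcomp Require Import all_boot all_order all_algebra.
Set Implicit Arguments. Unset Strict Implicit. Unset Printing Implicit Defensive.
Import Order.TTheory GRing.Theory Num.Theory.
Local Open Scope ring_scope.

Definition simple_graph (n : nat) (e : rel 'I_n) : Prop :=
  symmetric e /\ irreflexive e.

Definition deg (n : nat) (e : rel 'I_n) (i : 'I_n) : nat := #|[pred j | e i j]|.

Definition adjmx (R : nzRingType) (n : nat) (e : rel 'I_n) : 'M[R]_n :=
  \matrix_(i, j) (e i j)%:R.
Definition degmx (R : nzRingType) (n : nat) (e : rel 'I_n) : 'M[R]_n :=
  diag_mx (\row_i (deg e i)%:R).
Definition slapmx (R : nzRingType) (n : nat) (e : rel 'I_n) : 'M[R]_n :=
  degmx R e + adjmx R e.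

(* Blow-up G^(t): vertex set 'I_(n*t); vertex k lies in the class V_u with
   u = k %/ t (each class has t pairwise nonadjacent vertices), and
   two vertices are adjacent iff their classes are adjacent in G. *)
Lemma blow_class_proof (n t : nat) (k : 'I_(n * t)) : (k %/ t < n)%N.
Proof.
case: t k => [|t] k; first by case: k => m; rewrite muln0.
by rewrite ltn_divLR // ltn_ord.
Qed.

Definition blow_class (n t : nat) (k : 'I_(n * t)) : 'I_n :=
  Ordinal (blow_class_proof k).

Definition blowup (n : nat) (t : nat) (e : rel 'I_n) : rel 'I_(n * t) :=
  fun x y => e (blow_class x) (blow_class y).
Arguments blowup {n} t e.

From mathcomp Require Import all_boot all_order all_algebra.
From mathcomp Require Import zify perm.
Set Implicit Arguments. Unset Strict Implicit. Unset Printing Implicit Defensive.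
Import Order.TTheory GRing.Theory Num.Theory.
Local Open Scope ring_scope.

(* List the vertices of G^(t+1) with the first copy of every class first and
   let S be the 0/1 matrix sending each remaining vertex to its class. Then
   xI - Q(G^(t+1)) has the blocks xI - D' - A, -A S, -S^T A, xI - D'' - S^T A S,
   where D' and D'' are the degree matrices of G^(t+1) on the two parts, and
   S S^T = tI. Conjugating by the unipotent block matrix [[1, S], [0, 1]] makes
   it block lower triangular, with diagonal blocks xI - (t+1) Q(G) and the
   diagonal matrix xI - D''; the eigenvalues of (t+1) Q(G) are (t+1) q_i. *)

Section BlowIndex.
Variables n m : nat.

Lemma blow_vertex_proof (u : 'I_n) (a : 'I_m) : (u * m + a < n * m)%N.
Proof. have := ltn_ord u; have := ltn_ord a; nia. Qed.

Definition blow_vertex (u : 'I_n) (a : 'I_m) : 'I_(n * m) :=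
  Ordinal (blow_vertex_proof u a).

Lemma blow_copy_proof (k : 'I_(n * m)) : (k %% m < m)%N.
Proof. by case: m k => [|m'] k; [case: k => k; rewrite muln0 | rewrite ltn_mod]. Qed.

Definition blow_copy (k : 'I_(n * m)) : 'I_m := Ordinal (blow_copy_proof k).

Lemma blow_vertex_class (u : 'I_n) (a : 'I_m) : blow_class (blow_vertex u a) = u.
Proof.
apply: val_inj => /=; have m_gt0 : (0 < m)%N by apply: leq_ltn_trans (ltn_ord a).
by rewrite divnMDl // divn_small // addn0.
Qed.

Lemma blow_vertex_copy (u : 'I_n) (a : 'I_m) : blow_copy (blow_vertex u a) = a.
Proof. by apply: val_inj => /=; rewrite modnMDl modn_small. Qed.

Lemma blow_vertexK (k : 'I_(n * m)) : blow_vertex (blow_class k) (blow_copy k) = k.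
Proof. by apply: val_inj => /=; rewrite -divn_eq. Qed.

Lemma eq_blow_vertex (u v : 'I_n) (a b : 'I_m) :
  (blow_vertex u a == blow_vertex v b) = (u == v) && (a == b).
Proof.
apply/idP/idP => [/eqP E | /andP[/eqP-> /eqP->] //].
have := congr1 (@blow_class n m) E; have := congr1 blow_copy E.
by rewrite !blow_vertex_class !blow_vertex_copy => -> ->; rewrite !eqxx.
Qed.

Lemma big_blow_vertex (T : Type) (idx : T) (op : Monoid.com_law idx)
    (F : 'I_(n * m) -> T) :
  \big[op/idx]_k F k = \big[op/idx]_u \big[op/idx]_a F (blow_vertex u a).
Proof.
rewrite pair_big (reindex (fun p : 'I_n * 'I_m => blow_vertex p.1 p.2)) //=.
exists (fun k => (blow_class k, blow_copy k)) => [[u a] _ | k _] /=.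
  by rewrite blow_vertex_class blow_vertex_copy.
exact: blow_vertexK.
Qed.

End BlowIndex.

Lemma det_reindex (R : comNzRingType) m k (E : m = k) (g : 'I_m -> 'I_k)
    (g_inj : injective g) (M : 'M[R]_k) :
  \det (\matrix_(i, j) M (g i) (g j)) = \det M.
Proof.
subst k; set s := perm g_inj.
have -> : \matrix_(i, j) M (g i) (g j) = row_perm s (col_perm s M).
  by apply/matrixP => i j; rewrite !mxE !permE.
rewrite row_permE col_permE !det_mulmx !det_perm odd_permV.
by rewrite mulrCA -expr2 sqrr_sign mulr1.
Qed.

Section FirstCopyFirst.
Variables n t : nat.

Definition first_copy_first (i : 'I_(n + n * t)) : 'I_(n * t.+1) :=
  match split i with
  | inl u => blow_vertex u ord0
  | inr k => blow_vertex (blow_class k) (lift ord0 (blow_copy k))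
  end.

Definition first_copy_last (k : 'I_(n * t.+1)) : 'I_(n + n * t) :=
  match unlift ord0 (blow_copy k) with
  | None => lshift (n * t) (blow_class k)
  | Some a => rshift n (blow_vertex (blow_class k) a)
  end.

Lemma first_copy_firstK : cancel first_copy_first first_copy_last.
Proof.
move=> i; rewrite /first_copy_first -[i in RHS]splitK; case: (split i) => [u|k].
  by rewrite /first_copy_last blow_vertex_copy unlift_none blow_vertex_class.
by rewrite /first_copy_last blow_vertex_copy liftK blow_vertex_class blow_vertexK.
Qed.

End FirstCopyFirst.

Section ClassMatrix.
Variables (R : nzRingType) (n t : nat).

Definition class_mx : 'M[R]_(n, n * t) := \matrix_(u, k) (blow_class k == u)%:R.

Lemma mulmx_class m (M : 'M[R]_(m, n)) :
  M *m class_mx = \matrix_(i, k) M i (blow_class k).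
Proof.
apply/matrixP => i k; rewrite !mxE (bigD1 (blow_class k)) //= mxE eqxx mulr1.
by rewrite big1 ?addr0 // => u /negbTE u_k; rewrite mxE eq_sym u_k mulr0.
Qed.

Lemma tr_class_mulmx m (M : 'M[R]_(n, m)) :
  class_mx^T *m M = \matrix_(k, j) M (blow_class k) j.
Proof.
apply/matrixP => k j; rewrite !mxE (bigD1 (blow_class k)) //= !mxE eqxx mul1r.
by rewrite big1 ?addr0 // => u /negbTE u_k; rewrite !mxE eq_sym u_k mul0r.
Qed.

Lemma class_mulmx_tr : class_mx *m class_mx^T = t%:R%:M.
Proof.
apply/matrixP => u v; rewrite !mxE big_blow_vertex.
under eq_bigr do under eq_bigr do rewrite !mxE blow_vertex_class.
rewrite (bigD1 u) //= [X in _ + X]big1 => [|w /negbTE w_u]; last first.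
  by rewrite big1 // => a _; rewrite w_u mul0r.
rewrite addr0 eqxx mul1r sumr_const card_ord.
by case: (u == v); rewrite ?mulr0n ?mul0rn.
Qed.

Lemma class_mulmx_diag (d : 'I_n -> R) :
  class_mx *m diag_mx (\row_k d (blow_class k)) = diag_mx (\row_u d u) *m class_mx.
Proof.
rewrite mul_mx_diag mul_diag_mx; apply/matrixP => u k; rewrite !mxE.
by case: eqP => [->|_]; rewrite ?mul1r ?mulr1 ?mul0r ?mulr0.
Qed.

End ClassMatrix.

Lemma det_block_elim (R : comNzRingType) n m (S : 'M[R]_(n, m))
    (Dn A : 'M[R]_n) (Dm : 'M[R]_m) :
  S *m Dm = Dn *m S ->
  \det (block_mx (Dn + A) (A *m S) (S^T *m A) (Dm + S^T *m A *m S)) =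
  \det (Dn + A + S *m S^T *m A) * \det Dm.
Proof.
move=> S_Dm.
have det_unipotent (T : 'M[R]_(n, m)) : \det (block_mx 1%:M T 0 1%:M) = 1.
  by rewrite det_ublock !det1 mulr1.
have elim : block_mx 1%:M S 0 1%:M *m
    block_mx (Dn + A) (A *m S) (S^T *m A) (Dm + S^T *m A *m S) *m
    block_mx 1%:M (- S) 0 1%:M = block_mx (Dn + A + S *m S^T *m A) 0 (S^T *m A) Dm.
  rewrite !mulmx_block !mul1mx !mul0mx !mulmx1 !mulmx0 !addr0 !add0r.
  congr block_mx.
  - by rewrite mulmxA.
  - rewrite mulmxN addrC; apply/eqP; rewrite subr_eq0; apply/eqP.
    by rewrite !mulmxDl !mulmxDr S_Dm !mulmxA addrCA addrA.
  - by rewrite mulmxN addrC addrK.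
by rewrite -(det_lblock _ (S^T *m A)) -elim !det_mulmx !det_unipotent mul1r mulr1.
Qed.

Definition blow_mx (R : nzRingType) n t (d : 'I_n -> R) (A : 'M[R]_n) :
    'M[R]_(n * t) :=
  \matrix_(k, l) (d (blow_class k) *+ (k == l) + A (blow_class k) (blow_class l)).

Lemma det_blow_mx (R : comNzRingType) n t (d : 'I_n -> R) (A : 'M[R]_n) :
  \det (blow_mx t.+1 d A) =
  \det (diag_mx (\row_u d u) + t.+1%:R *: A) * \prod_u d u ^+ t.
Proof.
have card_eq : (n + n * t = n * t.+1)%N by rewrite mulnS.
rewrite -(det_reindex card_eq (can_inj (@first_copy_firstK n t))).
pose S := class_mx R n t; pose Dt := diag_mx (\row_k d (@blow_class n t k)).
rewrite -/S -/Dt.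
have -> : \matrix_(i, j) blow_mx t.+1 d A (first_copy_first i) (first_copy_first j) =
    block_mx (diag_mx (\row_u d u) + A) (A *m S) (S^T *m A) (Dt + S^T *m A *m S).
  apply/matrixP => i j; rewrite [LHS]mxE /blow_mx [LHS]mxE /first_copy_first.
  rewrite -[i in RHS]splitK -[j in RHS]splitK.
  case: (split i) => [u|k]; case: (split j) => [v|l] /=.
  1-4: rewrite !blow_vertex_class eq_blow_vertex /S.
  - by rewrite block_mxEul !mxE eqxx andbT.
  - by rewrite block_mxEur mulmx_class mxE (negbTE (neq_lift _ _)) andbF add0r.
  - rewrite block_mxEdl tr_class_mulmx mxE (eq_sym (lift _ _)).
    by rewrite (negbTE (neq_lift _ _)) andbF add0r.
  - rewrite block_mxEdr mxE mulmx_class tr_class_mulmx !mxE.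
    by rewrite (inj_eq lift_inj) -eq_blow_vertex !blow_vertexK.
rewrite det_block_elim ?class_mulmx_diag // class_mulmx_tr mul_scalar_mx.
rewrite -addrA -{1}(scale1r A) -scalerDl nat1r; congr (_ * _).
rewrite det_diag big_blow_vertex; apply: eq_bigr => u _.
by under eq_bigr do rewrite mxE blow_vertex_class; rewrite prodr_const card_ord.
Qed.

Lemma char_poly_scale (F : fieldType) n (c : F) (M : 'M[F]_n) (r : 'I_n -> F) :
  char_poly M = \prod_i ('X - (r i)%:P) ->
  char_poly (c *: M) = \prod_i ('X - (c * r i)%:P).
Proof.
move=> charM; have [->|c_neq0] := eqVneq c 0.
  rewrite scale0r char_poly_trig; last by apply/is_trig_mxP => i j _; rewrite mxE.
  by apply: eq_bigr => i _; rewrite mxE mul0r.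
pose s : {poly F} := c^-1%:P * 'X.
have char_mxZ : char_poly_mx (c *: M) = c%:P *: map_mx (comp_poly s) (char_poly_mx M).
  apply/matrixP => i j; rewrite !mxE rmorphB rmorphMn /= comp_polyX comp_polyC.
  by rewrite mulrBr mulrnAr mulrA -polyCM mulfV // mul1r -polyCM.
rewrite /char_poly char_mxZ detZ det_map_mx /= -/(char_poly M) charM rmorph_prod.
rewrite -[n in c%:P ^+ n]card_ord -prodr_const -big_split /=; apply: eq_bigr => i _.
by rewrite comp_polyB comp_polyX comp_polyC mulrBr mulrA -!polyCM mulfV // mul1r.
Qed.

Lemma deg_blowup n t (e : rel 'I_n) (k : 'I_(n * t)) :
  deg (blowup t e) k = (t * deg e (blow_class k))%N.
Proof.
rewrite /deg -!sum1_card big_distrr /= [LHS]big_mkcond [RHS]big_mkcond /=.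
rewrite big_blow_vertex; apply: eq_bigr => u _.
under eq_bigr do rewrite inE /blowup blow_vertex_class.
by rewrite sum_nat_const card_ord inE; case: (e _ u); rewrite ?muln1 ?muln0.
Qed.

Lemma char_poly_mx_blowup (R : nzRingType) n t (e : rel 'I_n) :
  char_poly_mx (slapmx R (blowup t e)) =
  blow_mx t (fun u => 'X - ((t * deg e u)%:R)%:P) (- adjmx {poly R} e).
Proof.
apply/matrixP => k l; rewrite !mxE deg_blowup /blowup rmorphD rmorphMn !rmorph_nat.
by case: (k == l); rewrite ?mulr1n ?mulr0n ?add0r // opprD addrA.
Qed.

Lemma char_poly_blowup (R : comNzRingType) n t (e : rel 'I_n) :
  char_poly (slapmx R (blowup t.+1 e)) =
  char_poly (t.+1%:R *: slapmx R e) *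
  \prod_u ('X - ((t.+1 * deg e u)%:R)%:P) ^+ t.
Proof.
rewrite /char_poly char_poly_mx_blowup det_blow_mx; congr (\det _ * _).
apply/matrixP => u v; rewrite !mxE mulrN.
by case: (u == v); rewrite ?mulr1n ?mulr0n ?add0r ?sub0r -?natrD -!natrM
  !rmorph_nat ?mulnDr ?natrD ?opprD ?addrA.
Qed.

Theorem theorem2 (R : realFieldType) (n t : nat) (e : rel 'I_n)
    (q : 'I_n -> R) :
  simple_graph e ->
  (1 <= t)%N ->
  (forall i j : 'I_n, (i <= j)%N -> q j <= q i) ->
  char_poly (slapmx R e) = \prod_(i < n) ('X - (q i)%:P) ->
  char_poly (slapmx R (blowup t e)) =
    \prod_(i < n) ('X - (t%:R * q i)%:P) *
    \prod_(i < n) ('X - (t%:R * (deg e i)%:R)%:P) ^+ t.-1.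
Proof.
move=> _ t_gt0 _ charQ; case: t t_gt0 => // t _.
rewrite char_poly_blowup (char_poly_scale _ charQ); congr (_ * _).
by apply: eq_bigr => u _; rewrite natrM.
Qed.
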